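(* Let $(X,d)$ be a pointed metric space and let $((x_i,y_i))_{i\in I}$ be a Lipschitz interpolating family in $\widetilde X$ for $\mathrm{Lip}_0(X)$ with Lipschitz interpolation constant $M$, and let $T$ be its Lipschitz interpolating operator. Assume that there exists a bounded linear operator $R:\ell_\infty(I)\to\mathrm{Lip}_0(X)$ with $\|R\|\leq M$ and $T\circ R=\mathrm{Id}_{\ell_\infty(I)}$. Then there exists a Beurling set $(f_i)_{i\in I}$ of functions in $\mathrm{Lip}_0(X)$ for $((x_i,y_i))_{i\in I}$.
   Context: All spaces are real. $(X,d)$ is a metric space with base point $0$, $\widetilde{X}=\{(x,y)\in X\times X: x\neq y\}$. $\mathrm{Lip}_0(X)$ is the Banach space of Lipschitz $f:X\to\mathbb{R}$ with $f(0)=0$, normed by $\|f\|=\sup_{(x,y)\in\widetilde X}|f(x)-f(y)|/d(x,y)$. For a family $((x_i,y_i))_{i\in I}$ in $\widetilde X$, its Lipschitz interpolating operator is $T:\mathrm{Lip}_0(X)\to\ell_\infty(I)$, $T(f)=\big((f(x_i)-f(y_i))/d(x_i,y_i)\big)_{i\in I}$; the family is Lipschitz interpolating for $\mathrm{Lip}_0(X)$ if $T$ is surjective, and then its Lipschitz interpolation constant is $M=\inf\{K\geq 1: \forall \alpha\in\ell_\infty(I), \|\alpha\|_\infty\le1,\ \exists f\in\mathrm{Lip}_0(X),\ \|f\|\le K,\ T(f)=\alpha\}$. A Beurling set of functions in $\mathrm{Lip}_0(X)$ for such a family (with constant $M$) is a family $(f_i)_{i\in I}$ of functions $f_i:X\to\mathbb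 R$ with $f_i(0)=0$ for all $i$, $(f_i(x_j)-f_i(y_j))/d(x_j,y_j)=\delta_{ij}$ (Kronecker delta) for all $i,j\in I$, and $\sup_{(x,y)\in\widetilde X}\sum_{i\in I}|f_i(x)-f_i(y)|/d(x,y)\leq M$. *)

From Stdlib Require Import Reals List.
Open Scope R_scope.

Definition is_metric {X : Type} (d : X -> X -> R) : Prop :=
  (forall x y, 0 <= d x y) /\
  (forall x y, d x y = 0 <-> x = y) /\
  (forall x y, d x y = d y x) /\
  (forall x y z, d x z <= d x y + d y z).

Definition lip_le {X : Type} (d : X -> X -> R) (f : X -> R) (K : R) : Prop :=
  forall x y, x <> y -> Rabs (f x - f y) / d x y <= K.

Definition Lip0 {X : Type} (d : X -> X -> R) (x0 : X) (f : X -> R) : Prop :=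
  f x0 = 0 /\ exists K, lip_le d f K.

Definition sup_le {I : Type} (alpha : I -> R) (c : R) : Prop :=
  forall i, Rabs (alpha i) <= c.

Definition linfty {I : Type} (alpha : I -> R) : Prop := exists c, sup_le alpha c.

Definition interp_op {X I : Type} (d : X -> X -> R) (xs ys : I -> X)
  (f : X -> R) : I -> R :=
  fun i => (f (xs i) - f (ys i)) / d (xs i) (ys i).

Definition lip_interpolating {X I : Type} (d : X -> X -> R) (x0 : X)
  (xs ys : I -> X) : Prop :=
  (forall i, xs i <> ys i) /\
  forall alpha, linfty alpha ->
    exists f, Lip0 d x0 f /\ interp_op d xs ys f = alpha.

Definition interp_admissible {X I : Type} (d : X -> X -> R) (x0 : X)
  (xs ys : I -> X) (K : R) : Prop :=
  1 <= K /\
  forall alpha, sup_le alpha 1 ->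
    exists f, Lip0 d x0 f /\ lip_le d f K /\ interp_op d xs ys f = alpha.

Definition interp_constant {X I : Type} (d : X -> X -> R) (x0 : X)
  (xs ys : I -> X) (M : R) : Prop :=
  (forall K, interp_admissible d x0 xs ys K -> M <= K) /\
  (forall m, (forall K, interp_admissible d x0 xs ys K -> m <= K) -> m <= M).

Definition bounded_linear_le {X I : Type} (d : X -> X -> R) (x0 : X)
  (Rop : (I -> R) -> X -> R) (M : R) : Prop :=
  (forall alpha, linfty alpha -> Lip0 d x0 (Rop alpha)) /\
  (forall alpha beta (a : R), linfty alpha -> linfty beta ->
     Rop (fun i => a * alpha i + beta i) = (fun x => a * Rop alpha x + Rop beta x)) /\
  (forall alpha c, sup_le alpha c -> lip_le d (Rop alpha) (M * c)).

Definition lsum {I : Type} (F : list I) (g : I -> R) : R :=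
  fold_right (fun i acc => g i + acc) 0 F.

(** The (possibly infinite) sum of nonnegative terms sum_i |f_i x - f_i y|/d(x,y)
    is <= M iff every finite partial sum (over distinct indices) is <= M. *)
Definition beurling_set {X I : Type} (d : X -> X -> R) (x0 : X)
  (xs ys : I -> X) (M : R) (f : I -> X -> R) : Prop :=
  (forall i, f i x0 = 0) /\
  (forall i, (f i (xs i) - f i (ys i)) / d (xs i) (ys i) = 1) /\
  (forall i j, i <> j -> (f i (xs j) - f i (ys j)) / d (xs j) (ys j) = 0) /\
  (forall x y, x <> y -> forall F : list I, NoDup F ->
     lsum F (fun i => Rabs (f i x - f i y) / d x y) <= M).

(* The Beurling functions are the images [f_i = R e_i] of the unit vectors.
   [T R = Id] gives the interpolation conditions.  For the summability bound
   at a pair [x <> y] and finitely many indices [F], choose signs [s_j] with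
   [s_j (f_j x - f_j y) = |f_j x - f_j y|]; by linearity the sum over [F] is
   [(R a x - R a y) / d x y] for [a = sum_(j in F) s_j e_j], and since the [j]
   are distinct, [||a||_oo <= 1], so [||R|| <= M] bounds it by [M]. *)

From Stdlib Require Import Reals List Lra.
From Stdlib Require Import ClassicalDescription FunctionalExtensionality.
Open Scope R_scope.

Definition unit_vec {I : Type} (j : I) : I -> R :=
  fun i => if excluded_middle_informative (i = j) then 1 else 0.

Definition finite_comb {I : Type} (s : I -> R) (F : list I) : I -> R :=
  fun i => lsum F (fun j => s j * unit_vec j i).

Definition sign (a : R) : R := if Rle_dec 0 a then 1 else -1.

Lemma Rabs_sign_le (a : R) : Rabs (sign a) <= 1.
Proof.
  unfold sign, Rabs; destruct Rle_dec, Rcase_abs; lra.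
Qed.

Lemma sign_mul_eq_abs (a : R) : sign a * a = Rabs a.
Proof.
  unfold sign; destruct Rle_dec.
  - rewrite Rabs_right; lra.
  - rewrite Rabs_left; lra.
Qed.

Lemma lsum_ext {I : Type} (F : list I) (g h : I -> R) :
  (forall i, g i = h i) -> lsum F g = lsum F h.
Proof. intros Hgh; induction F; simpl; [reflexivity|]. now rewrite IHF, Hgh. Qed.

Lemma lsum_div {I : Type} (F : list I) (g : I -> R) (D : R) :
  lsum F (fun i => g i / D) = lsum F g / D.
Proof. induction F; simpl; unfold Rdiv in *; [ring|]. rewrite IHF; ring. Qed.

Lemma lsum_sub {I : Type} (F : list I) (g h : I -> R) :
  lsum F (fun i => g i - h i) = lsum F g - lsum F h.
Proof. induction F; simpl; [ring|]. rewrite IHF; ring. Qed.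

Lemma unit_vec_eq {I : Type} (j : I) : unit_vec j j = 1.
Proof. unfold unit_vec; destruct excluded_middle_informative; congruence. Qed.

Lemma unit_vec_neq {I : Type} (i j : I) : i <> j -> unit_vec j i = 0.
Proof. unfold unit_vec; destruct excluded_middle_informative; congruence. Qed.

Lemma unit_vec_sup_le {I : Type} (j : I) : sup_le (unit_vec j) 1.
Proof.
  intro i; unfold unit_vec; destruct excluded_middle_informative;
    [rewrite Rabs_R1 | rewrite Rabs_R0]; lra.
Qed.

Lemma linfty_unit_vec {I : Type} (j : I) : linfty (unit_vec j).
Proof. exists 1; apply unit_vec_sup_le. Qed.

Lemma linfty_zero {I : Type} : linfty (fun _ : I => 0).
Proof. exists 0; intro; rewrite Rabs_R0; lra. Qed.

Lemma linfty_comb {I : Type} (alpha beta : I -> R) (a : R) :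
  linfty alpha -> linfty beta -> linfty (fun i => a * alpha i + beta i).
Proof.
  intros [c Hc] [c' Hc']; exists (Rabs a * c + c'); intro i.
  eapply Rle_trans; [apply Rabs_triang|]; rewrite Rabs_mult.
  pose proof (Hc' i).
  pose proof (Rmult_le_compat_l _ _ _ (Rabs_pos a) (Hc i)); lra.
Qed.

Lemma linfty_finite_comb {I : Type} (s : I -> R) (F : list I) :
  linfty (finite_comb s F).
Proof.
  induction F as [|j F IH].
  - apply linfty_zero.
  - exact (linfty_comb _ _ (s j) (linfty_unit_vec j) IH).
Qed.

Lemma finite_comb_notin {I : Type} (s : I -> R) (F : list I) (i : I) :
  ~ In i F -> finite_comb s F i = 0.
Proof.
  unfold finite_comb; induction F as [|j F IH]; simpl; intros Hi; [reflexivity|].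
  rewrite IH, unit_vec_neq by intuition; ring.
Qed.

Lemma finite_comb_sup_le {I : Type} (s : I -> R) (F : list I) :
  (forall j, Rabs (s j) <= 1) -> NoDup F -> sup_le (finite_comb s F) 1.
Proof.
  intros Hs HF i; induction HF as [|j F Hj HF IH]; unfold finite_comb in *; simpl.
  - rewrite Rabs_R0; lra.
  - destruct (excluded_middle_informative (i = j)) as [->|Hij].
    + pose proof (finite_comb_notin s F j Hj) as Hzero; unfold finite_comb in Hzero.
      rewrite Hzero, unit_vec_eq, Rmult_1_r, Rplus_0_r; apply Hs.
    + rewrite unit_vec_neq, Rmult_0_r, Rplus_0_l by exact Hij; exact IH.
Qed.

Lemma dist_pos {X : Type} (d : X -> X -> R) (x y : X) :
  is_metric d -> x <> y -> 0 < d x y.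
Proof.
  intros [Hd0 [Hdeq _]] Hxy.
  destruct (Hd0 x y) as [Hlt|Heq]; [exact Hlt|].
  exfalso; apply Hxy, Hdeq; auto.
Qed.

Section LinearOperator.

Variables (X I : Type) (d : X -> X -> R) (x0 : X).
Variables (Rop : (I -> R) -> X -> R) (M : R).
Hypothesis HR : bounded_linear_le d x0 Rop M.

Lemma linear_op_zero (z : X) : Rop (fun _ => 0) z = 0.
Proof.
  destruct HR as [_ [Hlin _]].
  pose proof (Hlin _ _ 1 linfty_zero linfty_zero) as E; cbv beta in E.
  replace (fun _ : I => 1 * 0 + 0) with (fun _ : I => 0) in E
    by (apply functional_extensionality; intro; ring).
  apply (f_equal (fun f => f z)) in E; cbv beta in E; lra.
Qed.

Lemma linear_op_finite_comb (s : I -> R) (F : list I) (z : X) :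
  Rop (finite_comb s F) z = lsum F (fun j => s j * Rop (unit_vec j) z).
Proof.
  destruct HR as [_ [Hlin _]].
  induction F as [|j F IH]; simpl.
  - apply linear_op_zero.
  - change (finite_comb s (j :: F))
      with (fun i => s j * unit_vec j i + finite_comb s F i).
    rewrite (Hlin _ _ (s j) (linfty_unit_vec j) (linfty_finite_comb s F)), IH.
    reflexivity.
Qed.

Lemma lsum_abs_unit_images_le (x y : X) (F : list I) :
  is_metric d -> x <> y -> NoDup F ->
  lsum F (fun j => Rabs (Rop (unit_vec j) x - Rop (unit_vec j) y) / d x y) <= M.
Proof.
  intros Hd Hxy HF.
  set (s := fun j => sign (Rop (unit_vec j) x - Rop (unit_vec j) y)).
  assert (Hsum : lsum F (fun j => Rabs (Rop (unit_vec j) x - Rop (unit_vec j) y))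
                 = Rop (finite_comb s F) x - Rop (finite_comb s F) y).
  { rewrite !linear_op_finite_comb, <- lsum_sub.
    apply lsum_ext; intro j; unfold s; rewrite <- sign_mul_eq_abs; ring. }
  assert (Hs : forall j, Rabs (s j) <= 1) by (intro; apply Rabs_sign_le).
  destruct HR as [_ [_ Hbd]].
  pose proof (Hbd _ _ (finite_comb_sup_le s F Hs HF) x y Hxy) as Hlip.
  rewrite Rmult_1_r in Hlip.
  rewrite lsum_div, Hsum; eapply Rle_trans; [|exact Hlip].
  apply Rmult_le_compat_r; [|apply Rle_abs].
  exact (Rlt_le _ _ (Rinv_0_lt_compat _ (dist_pos d x y Hd Hxy))).
Qed.

End LinearOperator.

Theorem theorem3p10 (X I : Type) (d : X -> X -> R) (x0 : X)
  (xs ys : I -> X) (M : R) (Rop : (I -> R) -> X -> R) :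
  is_metric d ->
  lip_interpolating d x0 xs ys ->
  interp_constant d x0 xs ys M ->
  bounded_linear_le d x0 Rop M ->
  (forall alpha, linfty alpha -> interp_op d xs ys (Rop alpha) = alpha) ->
  exists f : I -> X -> R, beurling_set d x0 xs ys M f.
Proof.
  (* Only [||R|| <= M] enters the bound. *)
  intros Hd _ _ HR HTR.
  assert (Hinterp : forall i j,
            interp_op d xs ys (Rop (unit_vec i)) j = unit_vec i j)
    by (intros i j; now rewrite (HTR _ (linfty_unit_vec i))).
  exists (fun i => Rop (unit_vec i)); repeat split.
  - intro i; apply (proj1 HR _ (linfty_unit_vec i)).
  - intro i; rewrite <- unit_vec_eq with (j := i); apply Hinterp.
  - intros i j Hij; rewrite <- (unit_vec_neq j i) by auto; apply Hinterp.
  - intros x y Hxy F HF; exact (lsum_abs_unit_images_le X I d x0 Rop M HR x y F Hd Hxy HF).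
Qed.
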